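(* Let $k$ be a field and $K$ a field extension of $k$, with algebraic closure $\overline K$. Let $G(x)\in K[x]$ be a polynomial having a non-zero root in $\overline K$ which is algebraic over $k$. Then there exist a polynomial $g(x)\in k[x]$ with $g(0)\neq0$, a polynomial $H(x)\in K[x]$, and a non-zero polynomial $I(x)\in K[x]$ with $\deg(I)<\deg(G)$, all of whose roots in $\overline K$ are zero or transcendental over $k$, such that $I(x)g(x)=H(x)G(x)$ in $K[x]$. *)

From HB Require Import structures.
From mathcomp Require Import all_boot all_order all_algebra.
Set Implicit Arguments. Unset Strict Implicit. Unset Printing Implicit Defensive.
Import GRing.Theory.
Local Open Scope ring_scope.

Definition algebraic_via (F L : fieldType) (f : F -> L) (z : L) : Prop :=
  exists p : {poly F}, p != 0 /\ root (map_poly f p) z.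

Definition algebraic_ext (F L : fieldType) (f : F -> L) : Prop :=
  forall z : L, algebraic_via f z.

From HB Require Import structures.
From mathcomp Require Import all_boot all_order all_algebra.
From Stdlib Require Import Classical.

Set Implicit Arguments.
Unset Strict Implicit.
Unset Printing Implicit Defensive.
Import GRing.Theory.
Local Open Scope ring_scope.

(* If a <> 0 is a root of G and algebraic over k, it is a root of some p in
   k[x] with p(0) <> 0 (strip the powers of x).  Dividing G by gcd(G, p)
   lowers the degree of G while G still divides the quotient times p.
   Repeating this until no non-zero root of G is algebraic over k terminates
   because the degree drops, and the product of the p's is the g sought. *)

Lemma algebraic_via_const_neq0 (F L : fieldType) (f : {rmorphism F -> L}) (a : L) :
  a != 0 -> algebraic_via f a ->
  exists2 p : {poly F}, p.[0] != 0 & root (map_poly f p) a.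
Proof.
move=> a0 [p [p0 rp]].
have [n [q /implyP/(_ p0) q0 Ep]] := multiplicity_XsubC p 0.
exists q; first by rewrite -rootE.
move: rp; rewrite Ep subr0 rmorphM rmorphXn /= map_polyX rootM => /orP[//|].
by rewrite rootE hornerXn expf_eq0 (negPf a0) andbF.
Qed.

Lemma common_root_size_gcdp_gt1 (F L : fieldType) (f : {rmorphism F -> L})
    (p q : {poly F}) (a : L) :
  p != 0 -> root (map_poly f p) a -> root (map_poly f q) a ->
  (1 < size (gcdp p q))%N.
Proof.
move=> p0 rp rq; rewrite -(size_map_poly f).
apply: (@root_size_gt1 _ a); last by rewrite gcdp_map root_gcd rp rq.
by rewrite map_poly_eq0 gcdp_eq0 negb_and p0.
Qed.

Lemma divp_gcdp_mulC (F : fieldType) (p q : {poly F}) :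
  p %/ gcdp p q * q = q %/ gcdp p q * p.
Proof.
rewrite -[X in _ * X = _](divpK (dvdp_gcdr p q)).
by rewrite -[X in _ = _ * X](divpK (dvdp_gcdl p q)) mulrCA.
Qed.

Lemma ltn_size_divp (F : fieldType) (p d : {poly F}) :
  p != 0 -> (1 < size d)%N -> (size (p %/ d)%R < size p)%N.
Proof.
move=> p0 sd; have d0 : d != 0 by rewrite -size_poly_gt0 ltnW.
rewrite ltn_divpl // size_mul //.
by case: (size d) sd => [|[|n]] // _; rewrite addnS /= addnS ltnS leq_addr.
Qed.

Section ScaledDivisibility.

Variables (k K : fieldType) (iota : {rmorphism k -> K}).

Definition dvdp_scaled (G I : {poly K}) : Prop :=
  exists (g : {poly k}) (H : {poly K}), g.[0] != 0 /\ I * map_poly iota g = H * G.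

Lemma dvdp_scaled_refl (G : {poly K}) : dvdp_scaled G G.
Proof. by exists 1, 1; rewrite hornerC oner_neq0 rmorph1 mulr1 mul1r. Qed.

Lemma dvdp_scaled_trans (G J I : {poly K}) :
  dvdp_scaled G J -> dvdp_scaled J I -> dvdp_scaled G I.
Proof.
move=> [p [Q [p0 EJ]]] [g [H [g0 EI]]].
exists (g * p), (H * Q); split; first by rewrite hornerM mulf_neq0.
by rewrite rmorphM mulrA EI -mulrA EJ mulrA.
Qed.

Variables (Kbar : fieldType) (phi : {rmorphism K -> Kbar}).

Lemma dvdp_scaled_drop_root (G : {poly K}) (a : Kbar) :
  G != 0 -> a != 0 -> root (map_poly phi G) a -> algebraic_via (phi \o iota) a ->
  exists G1 : {poly K}, [/\ G1 != 0, (size G1 < size G)%N & dvdp_scaled G G1].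
Proof.
move=> G0 a0 rG /(algebraic_via_const_neq0 a0)[p p0].
rewrite map_poly_comp; set P := map_poly iota p => rP.
have sD := common_root_size_gcdp_gt1 G0 rG rP.
exists (G %/ gcdp G P); split; last 1 first.
- by exists p, (P %/ gcdp G P); rewrite divp_gcdp_mulC.
- by rewrite divpN0 ?gcdp_eq0 ?negb_and ?G0 // dvdp_leq ?dvdp_gcdl.
- exact: ltn_size_divp.
Qed.

Lemma dvdp_scaled_no_algebraic_root (G : {poly K}) : G != 0 ->
  exists I : {poly K}, [/\ I != 0, (size I <= size G)%N, dvdp_scaled G I &
    forall z, root (map_poly phi I) z -> z = 0 \/ ~ algebraic_via (phi \o iota) z].
Proof.
have [m ltGm] := ubnP (size G); elim: m => // m IH in G ltGm * => G0.
have [[a [a0 ra ala]] | noroot] := classic (exists a,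
  [/\ a != 0, root (map_poly phi G) a & algebraic_via (phi \o iota) a]).
  have [G1 [G10 ltG1 dvdG1]] := dvdp_scaled_drop_root G0 a0 ra ala.
  have [|I [I0 leI dvdI rootI]] := IH G1 _ G10; first exact: leq_trans ltG1 _.
  exists I; split=> //; first exact: leq_trans leI (ltnW ltG1).
  exact: dvdp_scaled_trans dvdG1 dvdI.
exists G; split=> //; first exact: dvdp_scaled_refl.
move=> z rz; have [-> | z0] := eqVneq z 0; [by left | right=> alz].
by apply: noroot; exists z.
Qed.

End ScaledDivisibility.

Theorem lemma2p2 (k K : fieldType) (Kbar : closedFieldType)
    (iota : {rmorphism k -> K}) (phi : {rmorphism K -> Kbar})
    (hKbar : algebraic_ext phi)
    (G : {poly K}) (hG0 : G != 0)
    (hroot : exists a : Kbar, [/\ a != 0, root (map_poly phi G) a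
                                 & algebraic_via (phi \o iota) a]) :
  exists (g : {poly k}) (H I : {poly K}),
    [/\ g.[0] != 0, I != 0, (size I < size G)%N,
        (forall z : Kbar, root (map_poly phi I) z ->
            z = 0 \/ ~ algebraic_via (phi \o iota) z)
      & I * map_poly iota g = H * G].
Proof.
have [a [a0 ra ala]] := hroot.
have [G1 [G10 ltG1 dvdG1]] := dvdp_scaled_drop_root hG0 a0 ra ala.
have [I [I0 leI dvdI rootI]] := dvdp_scaled_no_algebraic_root iota phi G10.
have [g [H [g0 EI]]] := dvdp_scaled_trans dvdG1 dvdI.
by exists g, H, I; split=> //; apply: leq_ltn_trans leI ltG1.
Qed.
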